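(* Let $X$ be a Banach space, $f:X\to\mathbb{R}\cup\{+\infty\}$ convex and lower semicontinuous, $\bar x\in[f\le0]$, $\tau>0$, $q\in(0,1]$, and adopt the convention $0^0=1$. Consider the conditions: (i) there is a neighbourhood $U$ of $\bar x$ such that $\tau\, d(x,[f\le0])\le f_+^q(x)$ for all $x\in U$; (ii) there is a neighbourhood $U$ of $\bar x$ such that $q f^{q-1}(x)\, d(0,\partial f(x))\ge\tau$ for all $x\in U\cap[f>0]$; (iii) there is a neighbourhood $U$ of $\bar x$ such that $q^q(1-q)^{1-q}d(x,[f\le0])^{q-1}d(0,\partial f(x))^q\ge\tau$ for all $x\in U\cap[f>0]$. Then: (a) (ii) implies (i), and (i) implies (ii) with $q\tau$ in place of $\tau$ (i.e. if (i) holds with constant $\tau$ then (ii) holds with constant $q\tau$); (b) (iii) implies (i), and (i) implies (iii) with $q^q(1-q)^{1-q}\tau$ in place of $\tau$. If $q=1$, all the conditions are equivalent.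
   Context: $[f\le0]=\{x: f(x)\le0\}$, $[f>0]=\{x:f(x)>0\}$, $f_+(x)=\max\{f(x),0\}$; for $f(x)\ge0$, $f^q(x):=[f(x)]^q$, $f_+^q(x)=[f_+(x)]^q$. $d(x,A)=\inf_{a\in A}\|x-a\|$, $d(x,\emptyset)=+\infty$. $\partial f(x)$ is the subdifferential of convex analysis ($\emptyset$ if $f(x)=+\infty$); $d(0,\partial f(x))=\inf\{\|x^*\|:x^*\in\partial f(x)\}$ ($+\infty$ if empty). *)

From HB Require Import structures.
From mathcomp Require Import all_boot all_order all_algebra.
From mathcomp Require Import all_classical all_reals all_analysis.
Set Implicit Arguments. Unset Strict Implicit. Unset Printing Implicit Defensive.
Import Order.TTheory GRing.Theory Num.Theory.
Import numFieldNormedType.Exports.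
Local Open Scope classical_set_scope.
Local Open Scope ring_scope.

Section Defs.
Context {R : realType} {X : normedModType R}.

Definition econvex (f : X -> \bar R) : Prop :=
  forall (x y : X) (t : R), 0 < t -> t < 1 ->
    (f (t *: x + (1 - t) *: y)%R <= t%:E * f x + (1 - t)%:E * f y)%E.

Definition is_lin_functional (phi : X -> R) : Prop :=
  (forall (a : R) (u v : X), phi (a *: u + v) = a * phi u + phi v).

Definition dual_elt (phi : X -> R) : Prop :=
  is_lin_functional phi /\ continuous phi.

Definition dual_norm (phi : X -> R) : \bar R :=
  ereal_sup [set (`|phi x|)%:E | x in [set x : X | `|x| <= 1]].

Definition subdiff (f : X -> \bar R) (x : X) : set (X -> R) :=
  [set phi | dual_elt phi /\ f x \is a fin_num /\
     forall y, (f x + (phi (y - x))%:E <= f y)%E].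

(* d(0, subdiff f x), = +oo if the subdifferential is empty *)
Definition dist0_subdiff (f : X -> \bar R) (x : X) : \bar R :=
  ereal_inf [set dual_norm phi | phi in subdiff f x].

(* d(x, A), = +oo if A is empty *)
Definition edist (x : X) (A : set X) : \bar R :=
  ereal_inf [set (`|x - a|)%:E | a in A].

Definition sublevel0 (f : X -> \bar R) : set X := [set x | (f x <= 0)%E].

Definition cond_i (f : X -> \bar R) (xbar : X) (tau q : R) : Prop :=
  exists U : set X, nbhs xbar U /\
    forall x, U x -> (tau%:E * edist x (sublevel0 f) <= poweR (maxe (f x) 0) q)%E.

Definition cond_ii (f : X -> \bar R) (xbar : X) (tau q : R) : Prop :=
  exists U : set X, nbhs xbar U /\
    forall x, U x -> (0 < f x)%E -> (f x < +oo)%E ->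
      (tau%:E <= q%:E * poweR (f x) (q - 1) * dist0_subdiff f x)%E.

Definition cond_iii (f : X -> \bar R) (xbar : X) (tau q : R) : Prop :=
  exists U : set X, nbhs xbar U /\
    forall x, U x -> (0 < f x)%E ->
      (tau%:E <= (powR q q * powR (1 - q) (1 - q))%:E
                 * poweR (edist x (sublevel0 f)) (q - 1)
                 * poweR (dist0_subdiff f x) q)%E.

End Defs.

(* If phi is a subgradient of f at x, the subgradient inequality at a point of [f <= 0]
   gives f(x) <= |phi| d(x, [f <= 0]); with tau d <= f^q this bounds |phi| from below,
   whence (i) => (ii) and (i) => (iii).
   Conversely, if tau d(x, [f <= 0]) > f(x)^q at some x near xbar, pick a < tau with
   f(x)^q < a d(x, [f <= 0]).  Ekeland's principle for min(f_+, f(x))^q with slope a gives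
   a nearby z, still with f(z)^q < a d(z, [f <= 0]), at which convexity of f and concavity
   of t^q yield f(y) >= f(z) - L |y - z| with L = a f(z)^(1-q) / q.  A Hahn-Banach
   argument turns this lower slope into a subgradient at z of norm at most L, which
   contradicts (ii) or (iii) since a < tau. *)

From HB Require Import structures.
From mathcomp Require Import all_boot all_order all_algebra.
From mathcomp Require Import all_classical all_reals all_analysis.
From mathcomp Require Import ring lra.
Set Implicit Arguments. Unset Strict Implicit. Unset Printing Implicit Defensive.
Import Order.TTheory GRing.Theory Num.Theory.
Import numFieldNormedType.Exports.
Local Open Scope classical_set_scope.
Local Open Scope ring_scope.

(* Algebraic Hahn-Banach: [epi] lies above the graph of a convex function [p] with
   [p 0 >= 0], and Zorn's lemma applied to graphs of linear maps on subspaces that are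
   dominated by [p] yields a linear [phi <= p]. *)
Section convex_linear_minorant.
Context {R : realType} {X : lmodType R}.
Variable epi : X -> R -> Prop.
Hypotheses (epi_total : forall y, exists r, epi y r)
  (epi0_ge0 : forall r, epi 0 r -> 0 <= r)
  (epi_convex : forall y1 y2 r1 r2 l, 0 < l -> l < 1 -> epi y1 r1 -> epi y2 r2 ->
     epi (l *: y1 + (1 - l) *: y2) (l * r1 + (1 - l) * r2)).

Definition dominated_graph (G : set (X * R)) :=
  [/\ forall x a b, G (x, a) -> G (x, b) -> a = b,
      forall x y a b s, G (x, a) -> G (y, b) -> G (s *: x + y, s * a + b) &
      forall x a r, G (x, a) -> epi x r -> a <= r].

Lemma dominated_graph_bigcup (F : set (set (X * R))) :
  F `<=` dominated_graph -> total_on F subset ->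
  dominated_graph (\bigcup_(G in F) G).
Proof.
move=> Fdom Ftot; split.
- move=> x a b [G1 FG1 G1a] [G2 FG2 G2b].
  have [s12|s21] := Ftot _ _ FG1 FG2.
  + by have [+ _ _] := Fdom _ FG2; apply; [exact: s12 _ G1a|].
  + by have [+ _ _] := Fdom _ FG1; apply; [|exact: s21 _ G2b].
- move=> x y a b s [G1 FG1 G1a] [G2 FG2 G2b].
  have [s12|s21] := Ftot _ _ FG1 FG2.
  + by exists G2 => //; have [_ + _] := Fdom _ FG2; apply; [exact: s12 _ G1a|].
  + by exists G1 => //; have [_ + _] := Fdom _ FG1; apply; [|exact: s21 _ G2b].
- by move=> x a r [G FG Ga]; have [_ _ +] := Fdom _ FG; apply.
Qed.

Lemma dominated_graph00 : dominated_graph [set (0, 0)].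
Proof.
split.
- by move=> x a b [_ ->] [_ ->].
- by move=> x y a b s [-> ->] [-> ->]; rewrite scaler0 add0r mulr0 add0r.
- by move=> x a r [-> ->]; exact: epi0_ge0.
Qed.

Lemma dominated_graphB G x y a b : dominated_graph G ->
  G (x, a) -> G (y, b) -> G (y - x, b - a).
Proof.
move=> [_ GD _] Gx Gy; have := GD _ _ _ _ (-1) Gx Gy.
by rewrite scaleN1r mulN1r !(addrC (- _)).
Qed.

Lemma dominated_graphZ G x a s : dominated_graph G -> G (x, a) -> G (s *: x, s * a).
Proof.
move=> Gdom Gx; have G0 := dominated_graphB Gdom Gx Gx.
have [_ GD _] := Gdom; have := GD _ _ _ _ s Gx G0.
by rewrite !subrr !addr0.
Qed.

Section extension.
Variables (A : set (X * R)) (x0 : X).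
Hypotheses (Adom : dominated_graph A) (A00 : A (0, 0)).

(* Convexity of [epi] separates the two families of admissible slopes along [x0]. *)
Lemma extension_slopes_sep m a s r m' a' t r' : A (m, a) -> 0 < s ->
    epi (m - s *: x0) r -> A (m', a') -> 0 < t -> epi (m' + t *: x0) r' ->
  t * (a - r) <= s * (r' - a').
Proof.
move=> Am s0 er Am' t0 er'; have [_ AD Aepi] := Adom.
have st0 : 0 < s + t by rewrite addr_gt0.
pose l := t / (s + t).
have l0 : 0 < l by rewrite divr_gt0.
have l1 : l < 1 by rewrite ltr_pdivrMr // mul1r ltrDr.
have ls : l * s = (1 - l) * t by rewrite /l; field; rewrite gt_eqF.
have := epi_convex l0 l1 er er'.
have -> : l *: (m - s *: x0) + (1 - l) *: (m' + t *: x0) = l *: m + (1 - l) *: m'.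
  by rewrite scalerBr scalerDr !scalerA ls addrACA addNr addr0.
have Acomb := AD _ _ _ _ l Am (dominated_graphZ (1 - l) Adom Am').
move=> /(Aepi _ _ _ Acomb).
have e u v : l * u + (1 - l) * v = (t * u + s * v) / (s + t).
  by rewrite /l; field; rewrite gt_eqF.
rewrite !e ler_pM2r ?invr_gt0 //; lra.
Qed.

Lemma extension_slope_exists : exists c,
  (forall m a s r, A (m, a) -> 0 < s -> epi (m - s *: x0) r -> a - r <= s * c) /\
  (forall m a t r, A (m, a) -> 0 < t -> epi (m + t *: x0) r -> t * c <= r - a).
Proof.
pose lo := [set v | exists m a s r,
  [/\ A (m, a), 0 < s, epi (m - s *: x0) r & v = (a - r) / s]].
have [r1 er1] := epi_total (0 - 1 *: x0).
have [r2 er2] := epi_total (0 + 1 *: x0).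
have lo_sup : has_sup lo.
  split; first by exists ((0 - r1) / 1), 0, 0, 1, r1.
  exists r2 => _ [m [a [s [r [Am s0 er ->]]]]].
  rewrite ler_pdivrMr // mulrC -[r2]subr0.
  by have := extension_slopes_sep Am s0 er A00 ltr01 er2; rewrite mul1r.
exists (sup lo); split=> [m a s r Am s0 er | m a t r Am t0 er].
  rewrite mulrC -ler_pdivrMr //; apply: (sup_upper_bound lo_sup).
  by exists m, a, s, r.
rewrite mulrC -ler_pdivlMr //; apply: ge_sup; first by case: lo_sup.
move=> _ [m' [a' [s [r' [Am' s0 er' ->]]]]].
rewrite ler_pdivrMr // mulrAC ler_pdivlMr // mulrC [leRHS]mulrC.
exact: extension_slopes_sep Am' s0 er' Am t0 er.
Qed.

Lemma dominated_graph_adjoin c : ~ (exists a, A (x0, a)) ->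
  (forall m a s r, A (m, a) -> 0 < s -> epi (m - s *: x0) r -> a - r <= s * c) ->
  (forall m a t r, A (m, a) -> 0 < t -> epi (m + t *: x0) r -> t * c <= r - a) ->
  dominated_graph [set p | exists m a t, A (m, a) /\ p = (m + t *: x0, a + t * c)].
Proof.
move=> x0A c_lo c_hi; have [Afun AD Aepi] := Adom; split.
- move=> x a b [m1 [a1 [t1 [Am1 [e1 ->]]]]] [m2 [a2 [t2 [Am2 [e2 ->]]]]].
  have [t12|t12] := eqVneq t1 t2.
    subst t2; have m12 : m1 = m2 by apply: (addIr (t1 *: x0)); rewrite -e1 -e2.
    by subst m2; rewrite (Afun _ _ _ Am1 Am2).
  (* otherwise [x0] would be a multiple of [m2 - m1], which is in the domain of [A] *)
  case: x0A; exists ((t1 - t2)^-1 * (a2 - a1)).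
  have -> : x0 = (t1 - t2)^-1 *: (m2 - m1).
    have t12' : t1 - t2 != 0 by rewrite subr_eq0.
    apply: (scalerI t12'); rewrite scalerA mulfV // scale1r scalerBl.
    by apply: (addIr (t2 *: x0)); rewrite subrK addrAC -e2 e1 addrAC subrr add0r.
  exact/(dominated_graphZ _ Adom)/(dominated_graphB Adom Am1 Am2).
- move=> x y a b s [m1 [a1 [t1 [Am1 [-> ->]]]]] [m2 [a2 [t2 [Am2 [-> ->]]]]].
  exists (s *: m1 + m2), (s * a1 + a2), (s * t1 + t2); split; first exact: AD.
  congr (_, _); last by ring.
  by rewrite scalerDr scalerA scalerDl addrACA.
- move=> x a r [m [a1 [t [Am [-> ->]]]]] er.
  have [t0|t0|t0] := ltgtP t 0.
  + have := c_lo m a1 (- t) r Am; rewrite oppr_gt0 scaleNr opprK => /(_ t0 er).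
    lra.
  + by have := c_hi m a1 t r Am t0 er; lra.
  + by move: er; rewrite t0 scale0r addr0 mul0r addr0; apply: Aepi.
Qed.

End extension.

Theorem convex_linear_minorant : exists phi : X -> R,
  (forall a u v, phi (a *: u + v) = a * phi u + phi v) /\
  (forall y r, epi y r -> phi y <= r).
Proof.
have [A [Adom Amax]] := Zorn_bigcup dominated_graph_bigcup.
have A00 : A (0, 0).
  have [[[x a] Axa]|A0] := pselect (exists p, A p).
    by have := dominated_graphB Adom Axa Axa; rewrite !subrr.
  case: (Amax _ _ dominated_graph00); split=> [p Ap|]; first by case: A0; exists p.
  by move=> /(_ (0, 0) erefl) ?; case: A0; exists (0, 0).
have Atot x : exists a, A (x, a).
  apply: contrapT => xA; have [c [c_lo c_hi]] := extension_slope_exists x Adom A00.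
  apply: Amax (dominated_graph_adjoin Adom xA c_lo c_hi); split.
    by move=> [m a] Am; exists m, a, 0; rewrite scale0r mul0r !addr0.
  move=> /(_ (x, c)) xcA; apply: xA; exists c; apply: xcA.
  by exists 0, 0, 1; rewrite scale1r mul1r !add0r.
have [Afun AD Aepi] := Adom.
pose phi x := projT1 (cid (Atot x)).
have Aphi x : A (x, phi x) by rewrite /phi; case: cid.
exists phi; split=> [a u v|y r]; last exact/Aepi/Aphi.
by apply: Afun (Aphi _) _; apply: AD; apply: Aphi.
Qed.

End convex_linear_minorant.

Section ekeland.
Context {R : realType} {X : completeNormedModType R}.
Variables (G : X -> R) (a : R).
Hypotheses (a_gt0 : 0 < a) (G_ge0 : forall y, 0 <= G y)
  (G_sublevel_closed : forall r, closed [set y | G y <= r]).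

Definition ekeland_set x := [set y | G y + a * `|y - x| <= G x].

Lemma ekeland_set_refl x : ekeland_set x x.
Proof. by rewrite /ekeland_set /= subrr normr0 mulr0 addr0. Qed.

Lemma ekeland_set_trans x y w :
  ekeland_set x y -> ekeland_set y w -> ekeland_set x w.
Proof.
rewrite /ekeland_set /= => Sxy Syw; apply: le_trans Sxy.
apply: le_trans (lerD Syw (lexx (a * `|y - x|))).
by rewrite -addrA lerD2l -mulrDr ler_pM2l // ler_distD.
Qed.

Lemma ekeland_set_chain (u : nat -> X) n k :
  (forall i, ekeland_set (u i) (u i.+1)) -> (n <= k)%N -> ekeland_set (u n) (u k).
Proof.
move=> Su; elim: k => [|k IHk]; first by rewrite leqn0 => /eqP ->; exact: ekeland_set_refl.
rewrite leq_eqVlt ltnS => /orP[/eqP ->|/IHk Snk]; first exact: ekeland_set_refl.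
exact: ekeland_set_trans Snk (Su k).
Qed.

Lemma ekeland_set_closed_lim x (u : nat -> X) z :
  u @ \oo --> z -> (\forall k \near \oo, ekeland_set x (u k)) -> ekeland_set x z.
Proof.
move=> uz Su; rewrite /ekeland_set /= -lerBrDr; apply/ler_addgt0Pr => e e0.
have ea : a * (e / a) = e by rewrite mulrC divfK // gt_eqF.
rewrite -[e]ea.
apply: (closed_cvg _ (@G_sublevel_closed _) _ _ uz).
near=> k.
have zk : `|z - u k| < e / a.
  by near: k; apply: ((fcvgrPdist_lt _).1 uz); rewrite divr_gt0.
have : ekeland_set x (u k) by near: k.
have tri : a * `|z - x| <= a * `|z - u k| + a * `|u k - x|.
  by rewrite -mulrDr ler_pM2l // ler_distD.
have : a * `|z - u k| <= a * (e / a) by rewrite ler_pM2l // ltW.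
rewrite /ekeland_set /=; lra.
Unshelve. all: by end_near.
Qed.

(* [u n.+1] nearly minimises [G] on [ekeland_set (u n)], which makes the nested sets
   [ekeland_set (u n)] shrink to a point. *)
Lemma ekeland_sequence x0 : exists u : nat -> X, [/\ u 0%N = x0,
  forall n, ekeland_set (u n) (u n.+1) &
  forall n y, ekeland_set (u n.+1) y -> a * `|y - u n.+1| <= n.+1%:R^-1].
Proof.
have step x (n : nat) : exists y, ekeland_set x y /\
    G y <= inf (G @` ekeland_set x) + n.+1%:R^-1.
  have Ginf : has_inf (G @` ekeland_set x).
    by split; [exists (G x), x; [exact: ekeland_set_refl|] | exists 0 => _ [y _ <-]].
  have e0 : 0 < n.+1%:R^-1 :> R by rewrite invr_gt0 ltr0Sn.
  have [_ [y Sy <-] ?] := inf_adherent e0 Ginf.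
  by exists y; split => //; apply: ltW.
pose next x n := projT1 (cid (step x n)).
have nextP x n := projT2 (cid (step x n)).
pose u := fix u n := if n is n'.+1 then next (u n') n' else x0.
exists u; split => // [n|n y Sy]; first by have [] := nextP (u n) n.
have [_ unext] := nextP (u n) n; rewrite -/(next _ _) -/(u n.+1) in unext.
have : inf (G @` ekeland_set (u n)) <= G y.
  apply: ge_inf; [by exists 0 => _ [w _ <-] | exists y => //].
  by apply: ekeland_set_trans Sy; have [] := nextP (u n) n.
move=> Gy; rewrite -(lerD2l (G y)); apply: le_trans Sy _; apply: le_trans unext _.
by rewrite lerD2r.
Qed.

Lemma ekeland_principle x0 : exists z,
  G z + a * `|z - x0| <= G x0 /\ forall y, G z <= G y + a * `|y - z|.
Proof.
have [u [u0 Su u_small]] := ekeland_sequence x0.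
have u_cauchy : cvg (u @ \oo).
  apply/cauchy_cvgP/cauchy_exP => e e0.
  have [N] := @ltr_add_invr R 0 (a * e) (mulr_gt0 a_gt0 e0); rewrite add0r => Ne.
  exists (u N.+1), N.+1 => // k /= Nk; rewrite -ball_normE /= distrC.
  have := u_small N (u k) (ekeland_set_chain Su Nk).
  by rewrite -(ltr_pM2l a_gt0) => /le_lt_trans; apply.
have [z uz] := (cvg_ex _).1 u_cauchy.
have Sz n : ekeland_set (u n) z.
  by apply: ekeland_set_closed_lim uz _; exists n => // k; apply: ekeland_set_chain.
exists z; split; first by rewrite -u0; exact: Sz.
move=> y; rewrite leNgt; apply/negP => Gy.
have Szy : ekeland_set z y by rewrite /ekeland_set /= ltW.
have yz_small n : a * `|y - z| <= 2 * n.+1%:R^-1.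
  have : a * `|y - z| <= a * `|y - u n.+1| + a * `|z - u n.+1|.
    by rewrite -mulrDr ler_pM2l // -[`|z - _|]distrC ler_distD.
  move/le_trans; apply; rewrite mulr_natl mulr2n; apply: lerD.
    exact: u_small n y (ekeland_set_trans (Sz n.+1) Szy).
  exact: u_small n z (Sz n.+1).
have yz0 : a * `|y - z| <= 0.
  apply/ler_addgt0Pr => e e0; rewrite add0r.
  have [N] := ltr_add_invr (divr_gt0 e0 (ltr0Sn R 1)); rewrite add0r => Ne.
  by apply: le_trans (yz_small N) _; rewrite mulrC -ler_pdivlMr // ltW.
have yz : y = z by apply/eqP; rewrite -subr_eq0 -normr_le0 -(pmulr_rle0 _ a_gt0).
by move: Gy; rewrite yz subrr normr0 mulr0 addr0 ltxx.
Qed.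

End ekeland.

Section lin_functional.
Context {R : realType} {X : normedModType R}.
Variable phi : X -> R.
Hypothesis phi_lin : is_lin_functional phi.

Lemma lin_functional0 : phi 0 = 0.
Proof.
have := phi_lin 1 0 0; rewrite scale1r addr0 mul1r => e.
by apply: (addrI (phi 0)); rewrite addr0 -e.
Qed.

Lemma lin_functionalZ a u : phi (a *: u) = a * phi u.
Proof. by have := phi_lin a u 0; rewrite addr0 lin_functional0 addr0. Qed.

Lemma lin_functionalN u : phi (- u) = - phi u.
Proof. by rewrite -scaleN1r lin_functionalZ mulN1r. Qed.

Lemma lin_functionalB u v : phi (u - v) = phi u - phi v.
Proof. by have := phi_lin 1 u (- v); rewrite scale1r mul1r lin_functionalN. Qed.

Lemma lin_functional_bounded_continuous L :
  (forall y, `|phi y| <= L * `|y|) -> continuous phi.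
Proof.
move=> phiL x; apply/cvgrPdist_lt => e e0.
pose M := Num.max L 0 + 1.
have M0 : 0 < M by rewrite /M ltr_pwDr // le_max lexx orbT.
have LM : L <= M.
  have : L <= Num.max L 0 by rewrite le_max lexx.
  by rewrite /M; lra.
have phiM y : `|phi y| <= M * `|y| by apply: le_trans (phiL y) (ler_wpM2r _ LM).
apply/nbhs_ballP; exists (e / M) => /=; first by rewrite divr_gt0.
move=> y; rewrite -ball_normE /= -lin_functionalB => xy.
by apply: le_lt_trans (phiM _) _; rewrite mulrC -ltr_pdivlMr.
Qed.

Lemma dual_norm_ge0 : (0 <= dual_norm phi)%E.
Proof.
apply: le_ereal_sup_tmp; exists `|phi 0|%:E; first by exists 0 => //=; rewrite normr0.
by rewrite lin_functional0 normr0.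
Qed.

Lemma dual_normP n : dual_norm phi = n%:E -> forall v, `|phi v| <= n * `|v|.
Proof.
move=> phin v; have [->|v0] := eqVneq v 0.
  by rewrite lin_functional0 !normr0 mulr0.
have nv : 0 < `|v| by rewrite normr_gt0.
pose u := `|v|^-1 *: v.
have nu : `|u| = 1 by rewrite normrZ normfV normr_id mulVf // gt_eqF.
have : (`|phi u|%:E <= dual_norm phi)%E.
  by apply: ereal_sup_ubound; exists u => //=; rewrite nu.
rewrite phin lee_fin => phiu.
have -> : v = `|v| *: u by rewrite /u scalerA mulfV ?gt_eqF // scale1r.
by rewrite lin_functionalZ normrM normr_id normrZ normr_id nu mulr1 mulrC ler_wpM2r.
Qed.

End lin_functional.

Section normed.
Context {R : realType} {X : normedModType R}.

Lemma dual_norm_le (phi : X -> R) L :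
  0 <= L -> (forall y, `|phi y| <= L * `|y|) -> (dual_norm phi <= L%:E)%E.
Proof.
move=> L0 phiL; apply: ge_ereal_sup => _ [y /= y1 <-]; rewrite lee_fin.
by apply: le_trans (phiL y) _; rewrite -[leRHS]mulr1 ler_wpM2l.
Qed.

Lemma edist_fin (x : X) (S : set X) s0 :
  S s0 -> exists D, [/\ edist x S = D%:E, 0 <= D, (forall s, S s -> D <= `|x - s|) &
    (forall e, (forall s, S s -> e <= `|x - s|) -> e <= D)].
Proof.
move=> Ss0.
have d_ub : (edist x S <= `|x - s0|%:E)%E by apply: ereal_inf_lbound; exists s0.
have d_ge0 : (0 <= edist x S)%E.
  by apply: le_ereal_inf_tmp => _ [s _ <-]; rewrite lee_fin.
have d_fin : edist x S \is a fin_num.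
  by rewrite ge0_fin_numE // (le_lt_trans d_ub) ?ltry.
exists (fine (edist x S)); split; [by rewrite fineK | by rewrite fine_ge0 | |].
  by move=> s Ss; rewrite -lee_fin fineK //; apply: ereal_inf_lbound; exists s.
move=> e He; rewrite -lee_fin fineK //; apply: le_ereal_inf_tmp => _ [s Ss <-].
by rewrite lee_fin He.
Qed.

End normed.

Lemma ler_powR2r {R : realType} (r x y : R) : 0 <= r -> 0 <= x -> x <= y ->
  x `^ r <= y `^ r.
Proof.
move=> r0 x0 xy; have x_nneg : x \in Num.nneg by rewrite nnegrE.
have y_nneg : y \in Num.nneg by rewrite nnegrE (le_trans x0 xy).
exact: (@ge0_ler_powR R r r0 x y x_nneg y_nneg xy).
Qed.

Section powR_inequalities.
Context {R : realType}.
Variable q : R.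
Hypotheses (q_gt0 : 0 < q) (q_le1 : q <= 1).

Lemma powRB1_powR1B x : 0 < x -> x `^ (q - 1) * x `^ (1 - q) = 1.
Proof.
move=> x0; rewrite -powRD; last by rewrite (gt_eqF x0) implybT.
by rewrite addrA subrK subrr powRr0.
Qed.

Lemma powR_le_powRV t r : 0 <= t -> 0 <= r -> (t `^ q <= r) = (t <= r `^ q^-1).
Proof.
move=> t0 r0; have qV0 : 0 <= q^-1 by rewrite invr_ge0 ltW.
apply/idP/idP => h.
  have := ler_powR2r qV0 (powR_ge0 t q) h.
  by rewrite -powRrM mulfV ?gt_eqF // powRr1.
have := ler_powR2r (ltW q_gt0) t0 h.
by rewrite -powRrM mulVf ?gt_eqF // powRr1.
Qed.

(* Concavity of [u |-> u `^ q], obtained from Young's inequality [conjugate_powR]. *)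
Lemma powR_le_tangent u x : 0 <= u -> 0 < x ->
  u `^ q <= x `^ q + q * x `^ (q - 1) * (u - x).
Proof.
move=> u0 x0; have [->|q1] := eqVneq q 1.
  by rewrite subrr powRr0 !mul1r (powRr1 u0) (powRr1 (ltW x0)) addrC subrK.
have q_lt1 : q < 1 by rewrite lt_neqAle q1 q_le1.
have q1B0 : 0 < 1 - q by rewrite subr_gt0.
have young : u `^ q * x `^ (1 - q) <=
    (u `^ q) `^ q^-1 / q^-1 + (x `^ (1 - q)) `^ (1 - q)^-1 / (1 - q)^-1.
  apply: conjugate_powR; rewrite ?powR_ge0 ?invr_gt0 //.
  by rewrite !invrK addrC subrK.
rewrite -!powRrM !mulfV ?gt_eqF // (powRr1 u0) (powRr1 (ltW x0)) !invrK in young.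
have xq1 : 0 < x `^ (q - 1) by rewrite powR_gt0.
have := ler_wpM2r (ltW xq1) young.
have -> : u `^ q * x `^ (1 - q) * x `^ (q - 1) = u `^ q.
  by rewrite -mulrA [X in _ * X]mulrC powRB1_powR1B // mulr1.
move=> /le_trans; apply.
suff -> : x `^ q + q * x `^ (q - 1) * (u - x) = (u * q + x * (1 - q)) * x `^ (q - 1) by [].
by rewrite -(mulr_powRB1 (ltW x0) q_gt0); ring.
Qed.

Lemma powR_iii_bound a x d : 0 < a -> 0 < x -> 0 < d -> x `^ q < a * d ->
  q `^ q * (1 - q) `^ (1 - q) * d `^ (q - 1) * (a * x `^ (1 - q) / q) `^ q <= a.
Proof.
move=> a0 x0 d0 xad; have q1B : 0 <= 1 - q by rewrite subr_ge0.
have xq1B : 0 <= a * x `^ (1 - q) by rewrite mulr_ge0 ?powR_ge0 // ltW.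
have qV0 : 0 <= q^-1 by rewrite invr_ge0 ltW.
rewrite (powRM _ xq1B qV0) (powRM _ (ltW a0) (powR_ge0 _ _)) powRAC.
have xq_le : (x `^ q) `^ (1 - q) <= a `^ (1 - q) * d `^ (1 - q).
  rewrite -powRM; [|exact: ltW a0|exact: ltW d0].
  exact: ler_powR2r q1B (powR_ge0 _ _) (ltW xad).
have qq : q `^ q * q^-1 `^ q = 1.
  by rewrite -powRM ?invr_ge0 ?ltW // mulfV ?gt_eqF // powR1.
have aa : a `^ q * a `^ (1 - q) = a.
  by rewrite -powRD ?(gt_eqF a0) ?implybT // addrC subrK powRr1 ?ltW.
have q1B_le1 : (1 - q) `^ (1 - q) <= 1.
  have q1B_le1 : 1 - q <= 1 by rewrite lerBlDr lerDl ltW.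
  by have := ler_powR2r q1B q1B q1B_le1; rewrite powR1.
have -> : q `^ q * (1 - q) `^ (1 - q) * d `^ (q - 1) *
    (a `^ q * (x `^ q) `^ (1 - q) * q^-1 `^ q) =
  q `^ q * (1 - q) `^ (1 - q) * d `^ (q - 1) * a `^ q * q^-1 `^ q *
    (x `^ q) `^ (1 - q) by ring.
apply: le_trans (ler_wpM2l _ xq_le) _; first by rewrite !mulr_ge0 ?powR_ge0.
have -> : q `^ q * (1 - q) `^ (1 - q) * d `^ (q - 1) * a `^ q * q^-1 `^ q *
    (a `^ (1 - q) * d `^ (1 - q)) = (1 - q) `^ (1 - q) * (q `^ q * q^-1 `^ q) *
    (a `^ q * a `^ (1 - q)) * (d `^ (q - 1) * d `^ (1 - q)) by ring.
by rewrite qq aa powRB1_powR1B // mulr1 mulr1 ler_piMl // ltW.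
Qed.

Lemma iii_const_gt0 : 0 < q `^ q * (1 - q) `^ (1 - q).
Proof.
apply: mulr_gt0; first exact: powR_gt0.
have [->|q1] := eqVneq q 1; first by rewrite subrr powRr0.
by rewrite powR_gt0 // subr_gt0 lt_neqAle q1.
Qed.

End powR_inequalities.

Section subgradient_of_lower_slope.
Context {R : realType} {X : normedModType R}.
Variables (f : X -> \bar R) (z : X) (fz L : R).
Hypotheses (f_neq_ninfty : forall x, f x != -oo%E) (f_convex : econvex f)
  (f_z : f z = fz%:E) (L_ge0 : 0 <= L)
  (f_lower_slope : forall y, ((fz - L * `|y - z|)%:E <= f y)%E).

(* An epigraph of the infimal convolution of [u |-> f (z + u) - f z] with [L * `|.|]. *)
Definition slope_epi (y : X) (r : R) :=
  exists u w, f (z + u) = w%:E /\ w - fz + L * `|y - u| <= r.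

Lemma slope_epi_total y : exists r, slope_epi y r.
Proof.
exists (L * `|y|), 0, fz; split; first by rewrite addr0.
by rewrite subrr add0r subr0.
Qed.

Lemma slope_epi0_ge0 r : slope_epi 0 r -> 0 <= r.
Proof.
move=> [u [w [fu]]]; rewrite sub0r normrN.
have := f_lower_slope (z + u); rewrite fu lee_fin (addrC z u) addrK; lra.
Qed.

Lemma slope_epi_convex y1 y2 r1 r2 l : 0 < l -> l < 1 ->
  slope_epi y1 r1 -> slope_epi y2 r2 ->
  slope_epi (l *: y1 + (1 - l) *: y2) (l * r1 + (1 - l) * r2).
Proof.
move=> l0 l1 [u1 [w1 [fu1 r1_ge]]] [u2 [w2 [fu2 r2_ge]]].
have l0' : 0 < 1 - l by rewrite subr_gt0.
pose u := l *: u1 + (1 - l) *: u2.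
have := f_convex (z + u1) (z + u2) l0 l1.
have -> : l *: (z + u1) + (1 - l) *: (z + u2) = z + u.
  by rewrite !scalerDr addrACA -scalerDl [l + _]addrC subrK scale1r.
rewrite fu1 fu2 -!EFinM -EFinD => fu.
have [w fzu] : exists w, f (z + u) = w%:E.
  by move: fu (f_neq_ninfty (z + u)); case: (f (z + u)) => [w| |] //; exists w.
rewrite fzu lee_fin in fu.
exists u, w; split => //.
have : `|l *: y1 + (1 - l) *: y2 - u| <= l * `|y1 - u1| + (1 - l) * `|y2 - u2|.
  have -> : l *: y1 + (1 - l) *: y2 - u = l *: (y1 - u1) + (1 - l) *: (y2 - u2).
    by rewrite !scalerBr opprD addrACA.
  by apply: le_trans (ler_normD _ _) _; rewrite !normrZ !gtr0_norm.
move=> /(ler_wpM2l L_ge0).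
have := ler_wpM2l (ltW l0) r1_ge; have := ler_wpM2l (ltW l0') r2_ge.
lra.
Qed.

Lemma subgradient_of_lower_slope :
  exists phi, subdiff f z phi /\ (dual_norm phi <= L%:E)%E.
Proof.
have [phi [phi_lin phi_le]] := convex_linear_minorant slope_epi_total slope_epi0_ge0
  slope_epi_convex.
have phi_ub y : phi y <= L * `|y|.
  by apply: phi_le; exists 0, fz; rewrite addr0 subrr add0r subr0.
have phi_bound y : `|phi y| <= L * `|y|.
  rewrite ler_norml phi_ub andbT.
  by have := phi_ub (- y); rewrite lin_functionalN // normrN; lra.
exists phi; split; last exact: dual_norm_le.
split; first by split => //; exact: lin_functional_bounded_continuous phi_bound.
split; first by rewrite f_z.
move=> w; have := f_neq_ninfty w; case fw: (f w) => [w'| |] // _; last by rewrite leey.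
rewrite f_z -EFinD lee_fin.
have : phi (w - z) <= w' - fz.
  apply: phi_le; exists (w - z), w'; rewrite addrCA subrr addr0.
  by rewrite subrr normr0 mulr0 addr0.
lra.
Qed.

End subgradient_of_lower_slope.

Section ekeland_subgradient.
Context {R : realType} {X : completeNormedModType R}.
Variables (f : X -> \bar R) (q : R).
Hypotheses (f_neq_ninfty : forall x, f x != -oo%E) (f_convex : econvex f)
  (f_lsc : lower_semicontinuous f) (q_gt0 : 0 < q) (q_le1 : q <= 1).

(* A real-valued lower semicontinuous stand-in for [f_+] below level [F], to which
   Ekeland's principle applies. *)
Definition fcap (F : R) (y : X) : R :=
  match f y with r%:E => Num.min (Num.max r 0) F | +oo%E => F | -oo%E => 0 end.

Lemma fcap_ge0 F y : 0 <= F -> 0 <= fcap F y.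
Proof.
by move=> F0; rewrite /fcap; case: (f y) => [r| |] //; rewrite le_min F0 le_max lexx orbT.
Qed.

Lemma fcap_le F y : 0 <= F -> fcap F y <= F.
Proof. by move=> F0; rewrite /fcap; case: (f y) => [r| |] //; rewrite ge_min lexx orbT. Qed.

Lemma fcap_leE F y s : 0 <= s -> s < F -> (fcap F y <= s) = (f y <= s%:E)%E.
Proof.
move=> s0 sF; rewrite /fcap; have := f_neq_ninfty y; case: (f y) => [r| |] // _.
  by rewrite lee_fin ge_min (leNgt F s) sF orbF ge_max s0 andbT.
by rewrite (leNgt F s) sF leye_eq.
Qed.

Lemma fcap_lt F y v : 0 < v -> (f y < v%:E)%E -> fcap F y < v.
Proof.
move=> v0; rewrite /fcap; have := f_neq_ninfty y.
by case: (f y) => [r| |] // _; rewrite lte_fin => rv; rewrite gt_min gt_max rv v0.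
Qed.

Lemma fcapE F y r : f y = r%:E -> 0 < r -> r <= F -> fcap F y = r.
Proof.
move=> fy r0 rF; rewrite /fcap fy.
by rewrite (max_idPl (ltW r0)) (min_idPl rF).
Qed.

Lemma fcap_ltE F y : (0 < f y)%E -> fcap F y < F -> f y = (fcap F y)%:E.
Proof.
rewrite /fcap; case: (f y) => [r| |]; rewrite ?ltxx // lte_fin => r0.
by rewrite (max_idPl (ltW r0)) gt_min ltxx orbF => rF; rewrite (min_idPl (ltW rF)).
Qed.

Lemma fcap_powR_sublevel_closed F r : 0 < F -> closed [set y | fcap F y `^ q <= r].
Proof.
move=> F0; have [r0|r0] := ltP r 0.
  rewrite (_ : [set y | _] = set0); first exact: closed0.
  by apply/seteqP; split => y //= /le_lt_trans/(_ r0); rewrite ltNge powR_ge0.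
rewrite (_ : [set y | _] = [set y | fcap F y <= r `^ q^-1]); last first.
  by apply/seteqP; split => y /=; rewrite powR_le_powRV // fcap_ge0 // ltW.
have [Fr|rF] := leP F (r `^ q^-1).
  rewrite (_ : [set y | _] = setT); first exact: closedT.
  by apply/seteqP; split => y //= _; apply: le_trans (fcap_le _ (ltW F0)) Fr.
rewrite (_ : [set y | _] = ~` [set y | ((r `^ q^-1)%:E < f y)%E]).
  by apply: open_closedC; move/lower_semicontinuousP : f_lsc; apply.
apply/seteqP; split => y /=; rewrite fcap_leE ?powR_ge0 // leNgt => /negP //.
Qed.

(* At a minimiser [z] of [fcap F ^ q + a |. - z|], convexity of [f] and concavity of
   [u |-> u ^ q] turn the slope [a] of [f ^ q] into the slope [a fz ^ (1 - q) / q]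
   of [f]. *)
Lemma ekeland_lower_slope F z fz a : f z = fz%:E -> 0 < fz -> fz <= F -> 0 < a ->
  (forall y, fz `^ q <= fcap F y `^ q + a * `|y - z|) ->
  forall y, ((fz - a * fz `^ (1 - q) / q * `|y - z|)%:E <= f y)%E.
Proof.
move=> f_z fz0 fzF a0 z_min y; set L := a * fz `^ (1 - q) / q.
have L0 : 0 < L by rewrite divr_gt0 // mulr_gt0 // powR_gt0.
rewrite leNgt; apply/negP => fy_lt.
have [yz|yz] := eqVneq y z.
  by move: fy_lt; rewrite yz f_z subrr normr0 mulr0 subr0 ltxx.
have yz0 : 0 < `|y - z| by rewrite normr_gt0 subr_eq0.
have [w f_y] : exists w, f y = w%:E.
  by move: fy_lt (f_neq_ninfty y); case: (f y) => [w| |] //; exists w.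
rewrite f_y lte_fin in fy_lt.
set r := `|y - z|; have Lr0 : 0 < L * r by rewrite mulr_gt0.
pose t := fz / (2 * (fz + L * r)).
have t0 : 0 < t by rewrite divr_gt0 // mulr_gt0 // addr_gt0.
have t1 : t < 1 by rewrite ltr_pdivrMr ?mulr_gt0 ?addr_gt0 // mul1r; lra.
have tLr : t * (L * r) < fz / 2.
  have : t * (2 * (fz + L * r)) = fz by rewrite divfK // gt_eqF // mulr_gt0 // addr_gt0.
  by have := mulr_gt0 t0 fz0; rewrite !mulrDr; lra.
pose v := fz - t * (L * r).
have v0 : 0 < v by rewrite /v; lra.
pose yt := t *: y + (1 - t) *: z.
have f_yt : (f yt < v%:E)%E.
  apply: le_lt_trans (f_convex y z t0 t1) _.
  rewrite f_y f_z -!EFinM -EFinD lte_fin /v.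
  have : t * w < t * (fz - L * r) by rewrite ltr_pM2l.
  lra.
have ytz : `|yt - z| = t * r.
  have -> : yt - z = t *: (y - z).
    by rewrite /yt scalerBl scale1r scalerBr addrA addrAC addrK.
  by rewrite normrZ gtr0_norm.
have := z_min yt; rewrite ytz.
have : fcap F yt `^ q < v `^ q.
  apply: gt0_ltr_powR; rewrite ?nnegrE ?(ltW v0) ?fcap_ge0 ?(le_trans (ltW fz0)) //.
  exact: fcap_lt.
have := powR_le_tangent q_gt0 q_le1 (ltW v0) fz0.
have -> : q * fz `^ (q - 1) * (v - fz) = - (a * (t * r)).
  rewrite (_ : _ * (v - fz) = - (a * (t * r)) * (fz `^ (q - 1) * fz `^ (1 - q)) * (q / q)).
    by rewrite powRB1_powR1B // mulfV ?gt_eqF // !mulr1.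
  by rewrite /v /L; ring.
lra.
Qed.

Lemma ekeland_fcap_point x F a : f x = F%:E -> 0 < F -> 0 < a ->
    (forall s, sublevel0 f s -> F `^ q < a * `|x - s|) ->
  exists z fz, [/\ f z = fz%:E, 0 < fz, fz <= F, fz `^ q + a * `|z - x| <= F `^ q &
    forall y, fz `^ q <= fcap F y `^ q + a * `|y - z|].
Proof.
move=> f_x F0 a0 S_far.
have [z [z_desc z_min]] := ekeland_principle a0 (fun y => powR_ge0 (fcap F y) q)
  (fun r => fcap_powR_sublevel_closed (r := r) F0) x.
rewrite (fcapE f_x F0 (lexx F)) in z_desc.
have z_notin : ~ sublevel0 f z.
  move=> /S_far; rewrite distrC; have := powR_ge0 (fcap F z) q; lra.
have f_z0 : (0 < f z)%E by rewrite ltNge; apply/negP.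
have [fcap_z|F_le] := ltP (fcap F z) F.
  exists z, (fcap F z); split; [exact: fcap_ltE | | exact: ltW | by [] | by []].
  by have := f_z0; rewrite (fcap_ltE f_z0 fcap_z) lte_fin.
have fcap_z : fcap F z = F.
  by apply/eqP; rewrite eq_le F_le andbT; exact: fcap_le (ltW F0).
rewrite fcap_z in z_desc z_min.
have z_x : z = x.
  apply/eqP; rewrite -subr_eq0 -normr_le0 -(pmulr_rle0 _ a0); lra.
by subst z; exists x, F; split.
Qed.

Lemma exists_small_subgradient x F D a xbar : sublevel0 f xbar ->
    f x = F%:E -> 0 < F -> edist x (sublevel0 f) = D%:E -> 0 < a -> F `^ q < a * D ->
  exists z fz dz phi, [/\ `|z - x| < D, f z = fz%:E, 0 < fz,
    edist z (sublevel0 f) = dz%:E & fz `^ q < a * dz] /\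
    (subdiff f z phi /\ (dual_norm phi <= (a * fz `^ (1 - q) / q)%:E)%E).
Proof.
move=> xbar_S f_x F0 d_x a0 Fq_lt.
have [D' [d_x' _ D_lb _]] := edist_fin x xbar_S.
have D'E : D' = D by apply: EFin_inj; rewrite -d_x' d_x.
subst D'.
have [z [fz [f_z fz0 fzF z_desc z_min]]] := ekeland_fcap_point f_x F0 a0
  (fun s Ss => lt_le_trans Fq_lt (ler_wpM2l (ltW a0) (D_lb s Ss))).
have zx_lt : `|z - x| < D.
  by rewrite -(ltr_pM2l a0); have := powR_ge0 fz q; lra.
have [dz [d_z _ _ dz_glb]] := edist_fin z xbar_S.
have D_dz : D - `|z - x| <= dz.
  apply: dz_glb => s Ss; have := D_lb s Ss; have := ler_distD z x s.
  by rewrite [`|x - z|]distrC; lra.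
have fzq_lt : fz `^ q < a * dz.
  by have := ler_wpM2l (ltW a0) D_dz; rewrite mulrBr; lra.
have L0 : 0 <= a * fz `^ (1 - q) / q by rewrite divr_ge0 ?mulr_ge0 ?powR_ge0 ?ltW.
have [phi [phi_sub phi_norm]] := subgradient_of_lower_slope f_neq_ninfty f_convex f_z L0
  (ekeland_lower_slope f_z fz0 fzF a0 z_min).
by exists z, fz, dz, phi.
Qed.

End ekeland_subgradient.

Section error_bounds.
Context {R : realType} {X : completeNormedModType R}.
Variables (f : X -> \bar R) (xbar : X) (tau q : R).
Hypotheses (f_neq_ninfty : forall x, f x != -oo%E) (f_convex : econvex f)
  (f_lsc : lower_semicontinuous f) (xbar_S : sublevel0 f xbar)
  (tau_gt0 : 0 < tau) (q_gt0 : 0 < q) (q_le1 : q <= 1).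

Local Notation S := (sublevel0 f).

Lemma error_bound_finE x F D : f x = F%:E -> 0 <= F -> edist x S = D%:E ->
  (tau%:E * edist x S <= poweR (maxe (f x) 0) q)%E = (tau * D <= F `^ q).
Proof.
move=> f_x F0 d_x.
by rewrite f_x d_x (max_idPl _) ?lee_fin // poweR_EFin -EFinM lee_fin.
Qed.

Lemma edist_sublevel0 x : S x -> edist x S = 0%E.
Proof.
move=> Sx; have [D [d_x D0 D_lb _]] := edist_fin x Sx.
have := D_lb x Sx; rewrite subrr normr0 => D_le0.
by rewrite d_x; congr (_%:E); apply/eqP; rewrite eq_le D0 D_le0.
Qed.

Lemma edist_gt0 x : (0 < f x)%E ->
  exists D, [/\ edist x S = D%:E, 0 < D &
    forall e, (forall s, S s -> e <= `|x - s|) -> e <= D].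
Proof.
move=> f_x0; have [D [d_x _ _ D_glb]] := edist_fin x xbar_S.
exists D; split => //.
have : nbhs x [set y | (0%:E < f y)%E].
  by apply: open_nbhs_nbhs; split => //; move/lower_semicontinuousP : f_lsc; apply.
move=> /nbhs_ballP[e e0 x_ball].
apply: lt_le_trans e0 _; apply: D_glb => s Ss; rewrite leNgt; apply/negP => xs.
have /x_ball /= : ball x e s by rewrite -ball_normE.
by rewrite ltNge Ss.
Qed.

Lemma dist0_subdiff_ge0 x : (0 <= dist0_subdiff f x)%E.
Proof.
by apply: le_ereal_inf_tmp => _ [phi [[phi_lin _] _] <-]; exact: dual_norm_ge0.
Qed.

Lemma dist0_subdiff_pinfty x : f x = +oo%E -> dist0_subdiff f x = +oo%E.
Proof.
move=> f_x; apply/eqP; rewrite eq_le leey /=.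
by apply: le_ereal_inf_tmp => _ [phi [_ [fin _]] <-]; rewrite f_x in fin.
Qed.

(* A subgradient of norm [n] at [x] gives [f x <= n * d(x, S)]. *)
Lemma dist0_subdiff_ge x F D m : f x = F%:E -> 0 < F ->
    (forall e, (forall s, S s -> e <= `|x - s|) -> e <= D) ->
    (forall n, 0 < n -> F <= n * D -> m <= n) ->
  (m%:E <= dist0_subdiff f x)%E.
Proof.
move=> f_x F0 D_glb m_le; apply: le_ereal_inf_tmp => _ [phi phi_sub <-].
have [[phi_lin _] [_ phi_ge]] := phi_sub.
move: (dual_norm_ge0 phi_lin).
case phi_n: (dual_norm phi) => [n| |]; rewrite ?leey // lee_fin => n0.
have F_le s : S s -> F <= n * `|x - s|.
  move=> Ss; have := le_trans (phi_ge s) Ss; rewrite f_x -EFinD lee_fin.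
  rewrite -opprB lin_functionalN //; have := dual_normP phi_lin phi_n (x - s).
  by have := ler_norm (phi (x - s)); lra.
have n_gt0 : 0 < n.
  rewrite lt_neqAle n0 andbT; apply: contraTneq (F_le _ xbar_S) => <-.
  by rewrite mul0r -ltNge.
apply/m_le => //; rewrite mulrC -ler_pdivrMr //; apply: D_glb => s Ss.
by rewrite ler_pdivrMr // mulrC F_le.
Qed.

Lemma cond_i_ii : cond_i f xbar tau q -> cond_ii f xbar (q * tau) q.
Proof.
move=> [U [U_xbar U_i]]; exists U; split => // x Ux f_x0 f_xy.
have [F f_x] : exists F, f x = F%:E by move: f_x0 f_xy; case: (f x) => [F| |] //; exists F.
have F0 : 0 < F by rewrite f_x lte_fin in f_x0.
have [D [d_x _ _ D_glb]] := edist_fin x xbar_S.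
have := U_i x Ux; rewrite (error_bound_finE f_x (ltW F0) d_x) => tauD.
pose P := F `^ (q - 1); have P0 : 0 < P by rewrite powR_gt0.
have m_le : (((tau / P)%:E <= dist0_subdiff f x))%E.
  apply: (dist0_subdiff_ge f_x F0 D_glb) => n n0 F_le.
  have D0 : 0 < D by have := lt_le_trans F0 F_le; rewrite pmulr_rgt0.
  rewrite ler_pdivrMr // -(ler_pM2r D0); apply: le_trans tauD _.
  by rewrite -(mulr_powRB1 (ltW F0) q_gt0) -/P mulrAC ler_pM2r.
rewrite f_x poweR_EFin -EFinM.
apply: le_trans (lee_wpmul2l _ m_le); last by rewrite lee_fin mulr_ge0 ?ltW.
by rewrite -EFinM lee_fin -/P -mulrA [P * _]mulrC divfK ?gt_eqF.
Qed.

Lemma cond_i_iii : cond_i f xbar tau q ->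
  cond_iii f xbar (q `^ q * (1 - q) `^ (1 - q) * tau) q.
Proof.
move=> [U [U_xbar U_i]]; exists U; split => // x Ux f_x0.
have [D [d_x D0 D_glb]] := edist_gt0 f_x0.
have c0 := iii_const_gt0 q_gt0 q_le1.
pose P := D `^ (q - 1); have P0 : 0 < P by rewrite powR_gt0.
rewrite d_x poweR_EFin -EFinM.
have := f_neq_ninfty x; case f_x: (f x) => [F| |] // _; last first.
  rewrite dist0_subdiff_pinfty // poweRyr ?gt_eqF // gt0_muley ?leey //.
  by rewrite lte_fin mulr_gt0.
have F0 : 0 < F by rewrite f_x lte_fin in f_x0.
have := U_i x Ux; rewrite (error_bound_finE f_x (ltW F0) d_x) => tauD.
have m_le : (((tau / P) `^ q^-1)%:E <= dist0_subdiff f x)%E.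
  apply: (dist0_subdiff_ge f_x F0 D_glb) => n n0 F_le.
  have qV0 : 0 < q^-1 by rewrite invr_gt0.
  rewrite powR_le_powRV ?invrK ?(ltW n0) ?divr_ge0 ?(ltW tau_gt0) ?(ltW P0) //.
  rewrite ler_pdivrMr // -(ler_pM2r D0).
  apply: le_trans tauD (le_trans (ler_powR2r (ltW q_gt0) (ltW F0) F_le) _).
  by rewrite powRM ?(ltW n0) ?(ltW D0) // -(mulr_powRB1 (ltW D0) q_gt0) -/P mulrA mulrAC.
have := gt0_ler_poweR (ltW q_gt0) _ _ m_le.
rewrite !in_itv /= lee_fin powR_ge0 dist0_subdiff_ge0 !leey => /(_ isT isT).
rewrite -powRrM mulVf ?gt_eqF // powRr1 ?divr_ge0 ?(ltW tau_gt0) ?(ltW P0) // => m_le_q.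
apply: le_trans (lee_wpmul2l _ m_le_q); last by rewrite lee_fin mulr_ge0 ?ltW.
by rewrite -/P -EFinM lee_fin -[leRHS]mulrA [P * _]mulrC divfK ?gt_eqF.
Qed.

Lemma cond_i_of_subgradients U : nbhs xbar U ->
    (forall z fz dz phi a, U z -> 0 < a -> f z = fz%:E -> 0 < fz ->
      edist z S = dz%:E -> fz `^ q < a * dz -> subdiff f z phi ->
      (dual_norm phi <= (a * fz `^ (1 - q) / q)%:E)%E -> tau <= a) ->
  cond_i f xbar tau q.
Proof.
move=> /nbhs_ballP[d d0 U_ball] U_sub; exists (ball xbar (d / 2)).
split=> [|x]; first by apply: nbhsx_ballx; rewrite divr_gt0.
rewrite -ball_normE /= => x_near.
have := f_neq_ninfty x; case f_x: (f x) => [F| |] // _; last first.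
  by rewrite /maxe /= gt_eqF // leey.
have [F_le0|F0] := leP F 0.
  by rewrite edist_sublevel0 ?mule0 ?poweR_ge0 //= /sublevel0 /= f_x lee_fin.
have [D [d_x _ D_lb _]] := edist_fin x xbar_S.
rewrite -f_x (error_bound_finE f_x (ltW F0) d_x) leNgt; apply/negP => Fq_lt.
have D0 : 0 < D.
  by rewrite -(pmulr_rgt0 _ tau_gt0); apply: le_lt_trans (powR_ge0 F q) Fq_lt.
have w_lt : F `^ q / D < tau by rewrite ltr_pdivrMr.
have w_ge0 : 0 <= F `^ q / D by rewrite divr_ge0 ?powR_ge0 ?ltW.
pose a := (tau + F `^ q / D) / 2.
have a_lt : a < tau by rewrite /a; lra.
have a_gt0 : 0 < a by rewrite /a; lra.
have Fq_aD : F `^ q < a * D.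
  by rewrite /a mulrAC mulrDl divfK ?gt_eqF //; lra.
have [z [fz [dz [phi [[zx f_z fz0 d_z fzq] [phi_sub phi_le]]]]]] :=
  exists_small_subgradient f_neq_ninfty f_convex f_lsc q_gt0 q_le1 xbar_S f_x F0 d_x
    a_gt0 Fq_aD.
suff : tau <= a by rewrite leNgt a_lt.
apply: (U_sub z fz dz phi a) => //; apply: U_ball; rewrite -ball_normE /=.
have := ler_distD x xbar z; rewrite [`|x - z|]distrC.
have := D_lb xbar xbar_S; rewrite [`|x - xbar|]distrC.
lra.
Qed.

Lemma cond_ii_i : cond_ii f xbar tau q -> cond_i f xbar tau q.
Proof.
move=> [U [U_xbar U_ii]]; apply: (cond_i_of_subgradients U_xbar).
move=> z fz dz phi a Uz a0 f_z fz0 _ _ phi_sub phi_le.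
have := U_ii z Uz; rewrite f_z lte_fin ltry poweR_EFin -EFinM => /(_ fz0 isT) tau_le.
have d0_le : (dist0_subdiff f z <= dual_norm phi)%E.
  by apply: ereal_inf_lbound; exists phi.
have c0 : (0 <= (q * fz `^ (q - 1))%:E)%E by rewrite lee_fin mulr_ge0 ?powR_ge0 // ltW.
have := le_trans tau_le (lee_wpmul2l c0 (le_trans d0_le phi_le)).
rewrite -EFinM lee_fin.
rewrite (_ : _ * (a * _ / q) = a * (fz `^ (q - 1) * fz `^ (1 - q)) * (q / q)).
  by rewrite powRB1_powR1B // mulfV ?gt_eqF // !mulr1.
by ring.
Qed.

Lemma cond_iii_i : cond_iii f xbar tau q -> cond_i f xbar tau q.
Proof.
move=> [U [U_xbar U_iii]]; apply: (cond_i_of_subgradients U_xbar).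
move=> z fz dz phi a Uz a0 f_z fz0 d_z fzq phi_sub phi_le.
have := U_iii z Uz; rewrite f_z lte_fin d_z poweR_EFin -EFinM => /(_ fz0) tau_le.
have dz0 : 0 < dz by rewrite -(pmulr_rgt0 _ a0); apply: lt_trans fzq; rewrite powR_gt0.
set L := a * fz `^ (1 - q) / q.
have L0 : 0 <= L by rewrite divr_ge0 ?mulr_ge0 ?powR_ge0 // ltW.
have d0_le : (dist0_subdiff f z <= L%:E)%E.
  by apply: le_trans phi_le; apply: ereal_inf_lbound; exists phi.
have := gt0_ler_poweR (ltW q_gt0) _ _ d0_le.
rewrite !in_itv /= dist0_subdiff_ge0 lee_fin L0 !leey => /(_ isT isT) d0q_le.
have c0 : (0 <= (q `^ q * (1 - q) `^ (1 - q) * dz `^ (q - 1))%:E)%E.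
  by rewrite lee_fin !mulr_ge0 ?powR_ge0.
have := le_trans tau_le (lee_wpmul2l c0 d0q_le).
rewrite -EFinM lee_fin => /le_trans; apply.
exact: powR_iii_bound.
Qed.

End error_bounds.

Theorem theorem3p34 (R : realType) (X : completeNormedModType R)
    (f : X -> \bar R) (xbar : X) (tau q : R) :
  (forall x, f x != -oo%E) ->
  econvex f ->
  lower_semicontinuous f ->
  (f xbar <= 0)%E ->
  0 < tau -> 0 < q -> q <= 1 ->
  ((cond_ii f xbar tau q -> cond_i f xbar tau q) /\
   (cond_i f xbar tau q -> cond_ii f xbar (q * tau) q)) /\
  ((cond_iii f xbar tau q -> cond_i f xbar tau q) /\
   (cond_i f xbar tau q ->
      cond_iii f xbar (powR q q * powR (1 - q) (1 - q) * tau) q)) /\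
  (q = 1 ->
   (cond_i f xbar tau q <-> cond_ii f xbar tau q) /\
   (cond_i f xbar tau q <-> cond_iii f xbar tau q)).
Proof.
move=> f_ninfty f_convex f_lsc xbar_S tau0 q0 q1.
have ii_i := cond_ii_i f_ninfty f_convex f_lsc xbar_S tau0 q0 q1.
have iii_i := cond_iii_i f_ninfty f_convex f_lsc xbar_S tau0 q0 q1.
have i_ii := cond_i_ii xbar_S q0.
have i_iii := cond_i_iii f_ninfty f_lsc xbar_S tau0 q0 q1.
split; first by split; [exact: ii_i | exact: i_ii].
split; first by split; [exact: iii_i | exact: i_iii].
move=> q_eq1; subst q; split; split=> //.
  by move/i_ii; rewrite mul1r.
by move/i_iii; rewrite powRr1 // subrr powRr0 !mul1r.
Qed.
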